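(* In the setting of the directed balloon graph with parameters $(d,b)$ (with $d\ge2$, $b\ge1$, edge weight $\gamma>0$, loop weight $-\nu<0$, driver node $v_0$, target node $v_d$), the Gramian entry satisfies $$\lim_{t\to\infty}W_{v_d,v_d}(t)=\frac{b^2}{2\nu}\left(\frac{\gamma}{2\nu}\right)^{2d}\frac{(2d)!}{(d!)^2},$$ and hence, for fixed $\beta$, $$\frac{\beta^2}{2}\lim_{t\to\infty}\frac{1}{W_{v_d,v_d}(t)}=\frac{\beta^2}{2}\,\frac{2\nu}{b^2}\left(\frac{2\nu}{\gamma}\right)^{2d}\frac{(d!)^2}{(2d)!}.$$
   Context: Directed balloon graph with parameters $(d,b)$: two end nodes $v_0$ and $v_d$ and $b$ pairwise internally disjoint directed paths from $v_0$ to $v_d$, each of length $d$. Weighted adjacency matrix $A$: $A_{j,k}=\gamma$ if there is an edge from node $k$ to node $j$, $A_{j,j}=-\nu$ for every node, other entries $0$. $B=\mathbf{e}_{v_0}$. $W(t)$ is the solution of $\dot W=AW+WA^T+BB^T$, $W(0)=0$. $\beta\in\mathbb{R}$ is a fixed scalar (the output displacement $y_f-\mathbf{e}_{v_d}^Te^{At_f}\mathbf{x}_0$). *)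

From HB Require Import structures.
From mathcomp Require Import all_boot all_order all_algebra.
From mathcomp Require Import all_classical all_reals all_analysis.
Set Implicit Arguments. Unset Strict Implicit. Unset Printing Implicit Defensive.
Import Order.TTheory GRing.Theory Num.Theory.
Local Open Scope ring_scope.

(* Directed balloon graph with parameters (d,b), d >= 2.
   Nodes are indexed by 'I_(balloon_n b d), balloon_n b d = b*(d-1) + 2:
   - node 0 is v_0, node 1 is v_d;
   - node 2 + p*(d-1) + (k-1) (p < b, 1 <= k <= d-1) is the k-th internal
     node of the p-th path v_0 -> ... -> v_d. *)
Definition balloon_n (b d : nat) : nat := (b * d.-1).+2.

Definition v0 {b d : nat} : 'I_(balloon_n b d) := ord0.
Definition vd {b d : nat} : 'I_(balloon_n b d) := @Ordinal (balloon_n b d) 1 isT.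

Definition blevel (b d : nat) (i : 'I_(balloon_n b d)) : nat :=
  if val i == 0%N then 0%N
  else if val i == 1%N then d
  else ((val i - 2) %% d.-1).+1.

Definition bpath (b d : nat) (i : 'I_(balloon_n b d)) : nat :=
  ((val i - 2) %/ d.-1)%N.

Definition bedge (b d : nat) (k j : 'I_(balloon_n b d)) : bool :=
  (blevel j == (blevel k).+1) &&
  [|| val k == 0%N, val j == 1%N | bpath k == bpath j].

Definition balloonA (R : ringType) (b d : nat) (gamma nu : R)
  : 'M[R]_(balloon_n b d) :=
  \matrix_(j, k) (if j == k then - nu
                  else if bedge k j then gamma else 0).

Definition balloonB (R : ringType) (b d : nat) : 'cV[R]_(balloon_n b d) :=
  \col_i (if i == v0 then 1 else 0).

From HB Require Import structures.
From mathcomp Require Import all_boot all_order all_algebra.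
From mathcomp Require Import all_classical all_reals all_analysis.
From mathcomp Require Import ring lra zify unstable.
Import Order.TTheory GRing.Theory Num.Theory.
Import numFieldNormedType.Exports.

(* Write a = 2 nu and lev(i) for the distance of node i from v_0.  Let
   I_n(t) = int_0^t e^{-as} s^n / n! ds; it is characterised by the
   integration-by-parts recursion a I_{n+1} = I_n - e^{-at} t^{n+1}/(n+1)!,
   a I_0 = 1 - e^{-at}, and it tends to 1 / a^{n+1} as t -> +oo.
   Let c_i be the number of directed paths from v_0 to i: c_{v_d} = b and
   c_i = 1 for every other node.  The heart of the proof is the closed form
     W_ij(t) = c_i c_j gamma^(p+q) C(p+q, p) I_{p+q}(t),   p = lev i, q = lev j.
   Entrywise the Lyapunov equation reads
     W_ij' = -a W_ij + gamma sum_{k->i} W_kj + gamma sum_{k->j} W_ik + [i=j=v_0];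
   every in-neighbour of i has level p - 1 and weight 1, while v_0, v_d and
   the internal nodes have 0, b and 1 in-neighbours.  So if the closed form
   holds on all pairs of smaller level sum, Pascal's rule shows that the
   difference between W_ij and the closed form solves D' = -a D, D(0) = 0,
   hence vanishes: the closed form follows by induction on p + q.  Taking
   i = j = v_d gives the limit b^2 gamma^(2d) C(2d, d) / a^(2d+1); the second
   claim follows by continuity of inversion. *)

Lemma modn_eq_pred_dvd (m k : nat) : 0 < m -> (k %% m == m.-1) = (m %| k.+1).
Proof.
move=> m0; rewrite /dvdn -addn1 -modnDml addn1.
have := ltn_pmod k m0; move: (k %% m) => r lt_rm.
have [lt_r1m | lt_mr1 | eq_r1m] := ltngtP r.+1 m.
- by rewrite modn_small //; apply/negbTE/eqP; lia.
- lia.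
- by rewrite eq_r1m modnn -eq_r1m /= !eqxx.
Qed.

(* Among 0, ..., n - 1 exactly n / m have residue m - 1 modulo m; this
   counts the nodes of the last level, i.e. the in-neighbours of v_d. *)
Lemma count_last_residue (n m : nat) : 0 < m ->
  \sum_(0 <= k < n) (k %% m == m.-1 : nat) = n %/ m.
Proof.
move=> m0; rewrite divn_count_dvd big_add1 /=.
by apply: eq_bigr => k _; rewrite modn_eq_pred_dvd.
Qed.

Lemma sum_nat_eq1 (N k0 : nat) : \sum_(0 <= k < N) (k == k0 : nat) = (k0 < N).
Proof.
elim: N => [|N IH]; first by rewrite big_geq.
rewrite big_nat_recr //= IH ltnS leq_eqVlt.
by case: (ltngtP k0 N) => h; rewrite ?h ?eqxx /=; lia.
Qed.

Definition nat_level (d x : nat) : nat :=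
  if x == 0 then 0 else if x == 1 then d else ((x - 2) %% d.-1).+1.
Definition nat_path (d x : nat) : nat := (x - 2) %/ d.-1.
Definition nat_edge (d k j : nat) : bool :=
  (nat_level d j == (nat_level d k).+1) &&
  [|| k == 0, j == 1 | nat_path d k == nat_path d j].

Lemma nat_in_degree_vd (b d : nat) : 2 <= d ->
  \sum_(0 <= k < balloon_n b d) (nat_edge d k 1 : nat) = b.
Proof.
move=> d2; rewrite /balloon_n !big_nat_recl // /nat_edge /nat_level /=.
have [-> ->] : (d == 1) = false /\ (d == d.+1) = false by split; apply/eqP; lia.
rewrite !add0n -[RHS](mulnK b (_ : 0 < d.-1)); last by lia.
rewrite -count_last_residue; last by lia.
apply: eq_bigr => k _; rewrite andbT !subSS subn0.
by move: (k %% d.-1) => r; congr nat_of_bool; apply/eqP/eqP; lia.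
Qed.

Lemma nat_in_neighbour_internal (d k y : nat) : 2 <= d ->
  nat_edge d k y.+2 = (k == if y %% d.-1 == 0 then 0 else y.+1).
Proof.
move=> d2; have m0 : 0 < d.-1 by lia.
have lt_y := ltn_pmod y m0; have ey := divn_eq y d.-1.
rewrite /nat_edge /nat_level /nat_path /= !subSS !subn0.
case: k => [|[|z]] /=.
- by rewrite eqSS andbT; case: eqP.
- have -> : (y %% d.-1).+1 == d.+1 = false by apply/negbTE/eqP; lia.
  case: ifP => // /negbT r0; apply/esym/negbTE/eqP => e1y.
  have y0 : y = 0 by lia.
  by rewrite y0 mod0n in r0.
- rewrite !subSS !subn0; have [y0 | y0] := eqVneq (y %% d.-1) 0.
    by rewrite y0.
  apply/andP/eqP => [[/eqP h1 /eqP h2] | [ezy]].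
    have := divn_eq z d.-1; lia.
  have ez : z = y %/ d.-1 * d.-1 + (y %% d.-1).-1 by lia.
  have lt_r : (y %% d.-1).-1 < d.-1 by lia.
  rewrite ez modnMDl divnMDl // (modn_small lt_r) (divn_small lt_r) addn0.
  by split; apply/eqP; lia.
Qed.

Lemma in_degree {b d : nat} (i : 'I_(balloon_n b d)) : 2 <= d ->
  \sum_k (bedge k i : nat) = if val i == 0 then 0 else if val i == 1 then b else 1.
Proof.
move=> d2; rewrite (eq_bigr (fun k : 'I_(balloon_n b d) => (nat_edge d k i : nat))) //.
rewrite -(big_mkord xpredT (fun k => (nat_edge d k i : nat))).
case: i => [[|[|y]] lt_yn] /=.
- by rewrite big1.
- exact: nat_in_degree_vd.
- under eq_bigr do rewrite nat_in_neighbour_internal //.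
  by rewrite sum_nat_eq1; case: ifP => _; rewrite ?(ltnW lt_yn).
Qed.

Lemma bedge_level {b d : nat} {k i : 'I_(balloon_n b d)} :
  bedge k i -> blevel i = (blevel k).+1.
Proof. by case/andP => /eqP. Qed.

Lemma bedge_irrefl {b d : nat} (i : 'I_(balloon_n b d)) : bedge i i = false.
Proof. by apply/negbTE/negP => /bedge_level /n_Sn. Qed.

Lemma blevel_le {b d : nat} (i : 'I_(balloon_n b d)) : 2 <= d -> blevel i <= d.
Proof.
move=> d2; rewrite /blevel; case: eqP => // _; case: eqP => // _.
have : (val i - 2) %% d.-1 < d.-1 by rewrite ltn_pmod //; lia.
lia.
Qed.

Lemma blevel_eq0 {b d : nat} (i : 'I_(balloon_n b d)) : 1 <= d ->
  (blevel i == 0) = (val i == 0).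
Proof. by move=> d1; case: i => [[|[|x]] lt_xn] //=; rewrite /blevel /=; lia. Qed.

Lemma bedge_src_neq_vd {b d : nat} {k i : 'I_(balloon_n b d)} : 2 <= d ->
  bedge k i -> (val k == 1) = false.
Proof.
move=> d2 /bedge_level lev_ki; apply/negbTE/negP => /eqP k1.
by have := blevel_le i d2; rewrite lev_ki /blevel k1 /=; lia.
Qed.

Local Open Scope classical_set_scope.
Local Open Scope ring_scope.

Lemma natr_fact_neq0 {F : numDomainType} (n : nat) : (n`!%:R : F) != 0.
Proof. by rewrite pnatr_eq0 -lt0n fact_gt0. Qed.

Section ErlangFunctions.
Context {R : realType}.
Implicit Types (a t : R) (n : nat).

Definition decay a t : R := expR (- (a * t)).

Definition erlang a n t : R := decay a t * (t ^+ n / n`!%:R).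

(* erlang_int a n t = int_0^t erlang a n, defined through the recursion
   obtained by integrating by parts. *)
Fixpoint erlang_int a n t : R :=
  if n is m.+1 then (erlang_int a m t - erlang a m.+1 t) / a
  else (1 - decay a t) / a.

Lemma is_derive_eqfun {f g : R -> R} {x df : R} :
  f =1 g -> is_derive x (1 : R) f df -> is_derive x (1 : R) g df.
Proof. by move=> /funext ->. Qed.

Lemma decay_derive a t : is_derive t (1 : R) (decay a) (- a * decay a t).
Proof.
have lin : is_derive t (1 : R) (fun s : R => - (a * s)) (- a).
  by apply: is_derive_eq; rewrite -[in RHS](mulr1 a).
by rewrite mulrC; apply: is_derive1_comp.
Qed.

Lemma erlang_derive a n t : is_derive t (1 : R) (erlang a n)
  (- a * erlang a n t + (if n is m.+1 then erlang a m t else 0)).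
Proof.
have mono : is_derive t (1 : R) (fun s : R => s ^+ n / n`!%:R)
    (n%:R * t ^+ n.-1 / n`!%:R).
  have scaled := is_deriveZ (n`!%:R^-1) (is_deriveX n (is_derive_id t (1 : R))).
  have e : n`!%:R^-1 \*: @id R ^+ n =1 (fun s => s ^+ n / n`!%:R).
    by move=> s; rewrite exprfctE /= mulrC.
  apply: is_derive_eq; first exact: is_derive_eqfun e scaled.
  by rewrite /GRing.scale /= mulr1 mulrC.
have prod := is_deriveM (decay_derive a t) mono.
apply: (is_derive_eq (is_derive_eqfun (fun s => erefl) prod)).
rewrite /erlang /GRing.scale /=; case: n {mono prod} => [|m].
  by rewrite fact0 expr0; ring.
rewrite factS natrM; field.
by rewrite natr_fact_neq0 addrC natr1 pnatr_eq0.
Qed.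

Lemma erlang_int_derive a n t : a != 0 ->
  is_derive t (1 : R) (erlang_int a n) (erlang a n t).
Proof.
move=> a0; elim: n => [|m IH] /=.
  have base := is_deriveZ a^-1
    (is_deriveB (is_derive_cst (1 : R) t (1 : R)) (decay_derive a t)).
  apply: (is_derive_eq (is_derive_eqfun _ base)); first by move=> s; rewrite /= mulrC.
  by rewrite /erlang /GRing.scale /= fact0 expr0; field.
have step := is_deriveZ a^-1 (is_deriveB IH (erlang_derive a m.+1 t)).
apply: (is_derive_eq (is_derive_eqfun _ step)); first by move=> s; rewrite /= mulrC.
by rewrite /GRing.scale /=; field.
Qed.

Lemma erlang_int_at0 a n : erlang_int a n 0 = 0.
Proof.
elim: n => [|m IH] /=; first by rewrite /decay mulr0 oppr0 expR0 subrr mul0r.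
by rewrite IH /erlang expr0n /= mul0r mulr0 subrr mul0r.
Qed.

(* The defining recursion, solved for I_n: this is what makes the closed
   form of the Gramian satisfy the Lyapunov equation. *)
Lemma erlang_int_rec a n t : a != 0 ->
  erlang a n t + a * erlang_int a n t = if n is m.+1 then erlang_int a m t else 1.
Proof.
move=> a0; case: n => [|m] /=; last by field.
by rewrite /erlang expr0 fact0 divr1 mulr1; field.
Qed.

(* From e^x >= x^{n+1}/(n+1)!: e^{-at} t^n / n! <= (n+1) / (a^{n+1} t). *)
Lemma erlang_le a n t : 0 < a -> 0 < t ->
  erlang a n t <= n.+1%:R / a ^+ n.+1 * t^-1.
Proof.
move=> a0 t0; have at0 : 0 < a * t by rewrite mulr_gt0.
have taylor : (a * t) ^+ n.+1 / n.+1`!%:R <= expR (a * t).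
  by apply: le_trans (expR_ge1Dxn n (ltW at0)); lra.
rewrite /erlang /decay expRN mulrC.
apply: le_trans (_ : (t ^+ n / n`!%:R) * ((a * t) ^+ n.+1 / n.+1`!%:R)^-1 <= _).
  rewrite ler_pM2l ?divr_gt0 ?exprn_gt0 ?ltr0n ?fact_gt0 //.
  by rewrite lef_pV2 ?posrE ?expR_gt0 ?divr_gt0 ?exprn_gt0 ?ltr0n ?fact_gt0.
rewrite le_eqVlt; apply/orP; left; apply/eqP.
rewrite factS natrM exprMn !exprS; field.
have [an tn] : a ^+ n != 0 /\ t ^+ n != 0 by split; rewrite expf_neq0 // gt_eqF.
by rewrite an tn !gt_eqF // natr_fact_neq0 addrC natr1 pnatr_eq0.
Qed.

Lemma inv_cvgy : (t : R)^-1 @[t --> +oo] --> 0.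
Proof.
have -> : (fun t : R => t^-1) = inv_fun (@id R) by [].
apply/gtr0_cvgV0; last exact: cvg_id.
by near=> t; near: t; exact: nbhs_pinfty_gt.
Unshelve. all: by end_near. Qed.

Lemma erlang_cvg0 a n : 0 < a -> erlang a n t @[t --> +oo] --> 0.
Proof.
move=> a0; pose c := n.+1%:R / a ^+ n.+1.
apply: (@squeeze_cvgr _ _ _ _ (fun=> 0) (fun t => c * t^-1)).
- near=> t; have t0 : 0 < t by near: t; exact: nbhs_pinfty_gt.
  rewrite erlang_le // andbT /erlang /decay.
  by rewrite mulr_ge0 ?expR_ge0 // divr_ge0 ?exprn_ge0 ?ltW.
- exact: cvg_cst.
- by rewrite -(mulr0 c); apply: cvgMl_tmp; exact: inv_cvgy.
Unshelve. all: by end_near. Qed.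

Lemma erlang_int_cvg a n : 0 < a ->
  erlang_int a n t @[t --> +oo] --> (a ^+ n.+1)^-1.
Proof.
move=> a0; elim: n => [|m IH] /=.
  have decay0 : decay a t @[t --> +oo] --> 0.
    by move: (erlang_cvg0 a 0 a0); under eq_cvg do rewrite /erlang expr0 fact0 divr1 mulr1.
  suff : (1 - decay a t) / a @[t --> +oo] --> (1 - 0) / a.
    by rewrite subr0 mul1r expr1.
  by apply: (cvgMr_tmp (b := a^-1) (cvgB (cvg_cst (1 : R)) decay0)).
suff : (erlang_int a m t - erlang a m.+1 t) / a @[t --> +oo] -->
    ((a ^+ m.+1)^-1 - 0) / a.
  by rewrite subr0 -invfM -exprSr.
by apply: (cvgMr_tmp (b := a^-1) (cvgB IH (erlang_cvg0 a m.+1 a0))).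
Qed.

(* Uniqueness for f' = -a f: the solution with f(0) = 0 is zero, since
   f e^{at} has zero derivative. *)
Lemma linear_ode_zero a (f : R -> R) :
  (forall t, is_derive t (1 : R) f (- a * f t)) -> f 0 = 0 -> forall t, f t = 0.
Proof.
move=> f' f0 t.
have const : forall s : R, is_derive s (1 : R) (f * decay (- a)) 0.
  move=> s; apply: is_derive_eq (is_deriveM (f' s) (decay_derive (- a) s)) _.
  by rewrite /GRing.scale /=; ring.
have := is_derive_0_is_cst t 0 const.
change (f t * decay (- a) t = f 0 * decay (- a) 0 -> f t = 0).
rewrite f0 mul0r => /eqP; rewrite mulf_eq0 => /orP [/eqP //|].
by rewrite /decay gt_eqF // expR_gt0.
Qed.

End ErlangFunctions.

Section PascalKernel.
Context {R : realType}.

Definition pascal_kernel (g a : R) (p q : nat) (t : R) : R :=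
  g ^+ (p + q) * 'C(p + q, p)%:R * erlang_int a (p + q) t.

(* Pascal's rule C(n+1, p+1) = C(n, p+1) + C(n, p) combined with
   erlang_int_rec: the kernel solves the entrywise Lyapunov recursion. *)
Lemma pascal_kernel_rec (g a t : R) (p q : nat) : a != 0 ->
  g * (if p is p'.+1 then pascal_kernel g a p' q t else 0) +
  g * (if q is q'.+1 then pascal_kernel g a p q' t else 0) + (p + q == 0)%:R
  = g ^+ (p + q) * 'C(p + q, p)%:R * (erlang a (p + q) t + a * erlang_int a (p + q) t).
Proof.
move=> a0; rewrite erlang_int_rec // /pascal_kernel.
case: p => [|p]; case: q => [|q];
  rewrite ?addn0 ?add0n ?addSn ?addnS ?bin0 ?binn ?mulr0 ?addr0 ?add0r;
  cbv beta iota.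
- by rewrite expr0 !mul1r.
- by rewrite exprS; ring.
- by rewrite exprS; ring.
- by rewrite [in RHS]binS natrD [in RHS]exprS; ring.
Qed.

End PascalKernel.

Section GramianClosedForm.
Context {R : realType} {b d : nat} {gamma nu : R}.
Hypothesis d2 : (2 <= d)%N.

Local Notation N := (balloon_n b d).
Local Notation A := (balloonA b d gamma nu).
Local Notation B := (balloonB R b d).

(* Number of directed paths from v_0 to i: b for v_d, 1 otherwise. *)
Definition npaths (i : 'I_N) : R := if val i == 1%N then b%:R else 1.

Lemma sum_in_neighbours (i : 'I_N) (F : 'I_N -> R) (c : R) (phi : nat -> R) :
  (forall k, bedge k i -> F k = c * phi (blevel k)) ->
  \sum_k (if bedge k i then F k else 0) =
  c * npaths i * (if blevel i is p.+1 then phi p else 0).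
Proof.
move=> F_in.
transitivity (\sum_k (bedge k i : nat)%:R * (c * phi (blevel i).-1)).
  apply: eq_bigr => k _; case: ifP => [e_ki | _]; last by rewrite mul0r.
  by rewrite F_in // (bedge_level e_ki) mul1r.
rewrite -mulr_suml -natr_sum in_degree // /npaths.
have := blevel_eq0 i (ltnW d2).
have [-> | i0] := eqVneq (val i) 0%N; first by move=> /eqP ->; rewrite mul0r mulr0.
by case: (blevel i) => [|p] // _; case: ifP => _; ring.
Qed.

Lemma mulA_entry (M : 'M[R]_N) i j :
  (A *m M) i j = - nu * M i j + gamma * \sum_k (if bedge k i then M k j else 0).
Proof.
rewrite mxE mulr_sumr.
rewrite (eq_bigr (fun k => (if i == k then - nu * M k j else 0) +
                           gamma * (if bedge k i then M k j else 0))); last first.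
  move=> k _; rewrite mxE; case: eqP => [<-|_]; first by rewrite bedge_irrefl mulr0 addr0.
  by case: ifP; rewrite ?mul0r ?mulr0 ?add0r.
rewrite big_split /= (bigD1 i) //= eqxx big1 ?addr0 // => k /negbTE.
by rewrite eq_sym => ->.
Qed.

Lemma mulAT_entry (M : 'M[R]_N) i j :
  (M *m A^T) i j = - nu * M i j + gamma * \sum_k (if bedge k j then M i k else 0).
Proof.
rewrite -[M *m _]trmxK trmx_mul trmxK mxE mulA_entry mxE.
by under eq_bigr do rewrite mxE.
Qed.

Lemma BBT_entry i j :
  (B *m B^T) i j = ((val i == 0%N) && (val j == 0%N))%:R.
Proof.
have v0E (k : 'I_N) : (k == v0) = (val k == 0%N) by [].
by rewrite mxE big_ord1 !mxE !v0E; case: (val i == 0%N); case: (val j == 0%N);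
  rewrite ?mulr0 ?mulr1.
Qed.

Lemma lyapunov_entry (M : 'M[R]_N) i j :
  (A *m M + M *m A^T + B *m B^T) i j =
  - (2 * nu) * M i j + gamma * \sum_k (if bedge k i then M k j else 0)
  + gamma * \sum_k (if bedge k j then M i k else 0)
  + ((val i == 0%N) && (val j == 0%N))%:R.
Proof.
have addE (X Y : 'M[R]_N) : (X + Y) i j = X i j + Y i j by rewrite mxE.
by rewrite !addE mulA_entry mulAT_entry BBT_entry; ring.
Qed.

Hypothesis nu_gt0 : 0 < nu.

Local Notation a := (2 * nu).

Lemma a_gt0 : 0 < a.
Proof. by rewrite mulr_gt0. Qed.

Lemma a_neq0 : a != 0.
Proof. exact: lt0r_neq0 a_gt0. Qed.

Definition gramian_formula (i j : 'I_N) (t : R) : R :=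
  npaths i * npaths j * pascal_kernel gamma a (blevel i) (blevel j) t.

Definition gramian_coef (i j : 'I_N) : R :=
  npaths i * npaths j *
  (gamma ^+ (blevel i + blevel j) * 'C(blevel i + blevel j, blevel i)%:R).

Lemma gramian_formulaE i j t :
  gramian_formula i j t = gramian_coef i j * erlang_int a (blevel i + blevel j) t.
Proof. by rewrite /gramian_formula /pascal_kernel /gramian_coef !mulrA. Qed.

Lemma gramian_formula_at0 i j : gramian_formula i j 0 = 0.
Proof. by rewrite gramian_formulaE erlang_int_at0 mulr0. Qed.

Lemma gramian_formula_derive i j t :
  is_derive t (1 : R) (gramian_formula i j)
    (gramian_coef i j * erlang a (blevel i + blevel j) t).
Proof.
have scaled := is_deriveZ (gramian_coef i j)
  (erlang_int_derive a (blevel i + blevel j) t a_neq0).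
by apply: (is_derive_eq (is_derive_eqfun _ scaled)) => // s; rewrite gramian_formulaE.
Qed.

Lemma source_indicator (i j : 'I_N) :
  ((val i == 0%N) && (val j == 0%N))%:R =
  npaths i * npaths j * (blevel i + blevel j == 0%N)%:R.
Proof.
rewrite addn_eq0 !blevel_eq0 ?(ltnW d2) // /npaths.
by case: eqP => [->|_]; case: eqP => [->|_]; rewrite /= ?mulr1 ?mulr0.
Qed.

Lemma rhs_at_formula (M : 'M[R]_N) i j t :
  (forall k l, (blevel k + blevel l < blevel i + blevel j)%N ->
     M k l = gramian_formula k l t) ->
  (A *m M + M *m A^T + B *m B^T) i j =
  - a * M i j + gramian_coef i j *
    (erlang a (blevel i + blevel j) t + a * erlang_int a (blevel i + blevel j) t).
Proof.
move=> M_lower; rewrite lyapunov_entry source_indicator.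
rewrite (@sum_in_neighbours _ _ (npaths j)
  (fun r => pascal_kernel gamma a r (blevel j) t)); last first.
  move=> k e_ki; rewrite M_lower; last by rewrite (bedge_level e_ki) addSn.
  by rewrite /gramian_formula {1}/npaths (bedge_src_neq_vd d2 e_ki) mul1r.
rewrite (@sum_in_neighbours _ _ (npaths i)
  (fun r => pascal_kernel gamma a (blevel i) r t)); last first.
  move=> k e_kj; rewrite M_lower; last by rewrite (bedge_level e_kj) addnS.
  by rewrite /gramian_formula [npaths k]/npaths (bedge_src_neq_vd d2 e_kj) mulr1.
rewrite /gramian_coef -[in RHS]mulrA -pascal_kernel_rec ?a_neq0 //; ring.
Qed.

Lemma gramian_closed_form (W : R -> 'M[R]_N) :
  W 0 = 0 ->
  (forall t i j, is_derive t (1 : R) (fun s => W s i j)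
     ((A *m W t + W t *m A^T + B *m B^T) i j)) ->
  forall t i j, W t i j = gramian_formula i j t.
Proof.
move=> W0 W'.
suff by_level : forall m i j, (blevel i + blevel j < m)%N ->
    forall t, W t i j = gramian_formula i j t.
  by move=> t i j; apply: (by_level (blevel i + blevel j).+1).
elim=> [//|m IH] i j lt_ij_m t.
apply/eqP; rewrite -subr_eq0; apply/eqP; move: t.
apply: (linear_ode_zero a (fun t => W t i j - gramian_formula i j t));
  last by rewrite W0 mxE gramian_formula_at0 subr0.
move=> t; apply: is_derive_eq (is_deriveB (W' t i j) (gramian_formula_derive i j t)) _.
rewrite (rhs_at_formula (W t) i j t) => [|k l lt_kl]; last by apply: IH; lia.
by rewrite gramian_formulaE; ring.
Qed.

Lemma gramian_vd_cvg (W : R -> 'M[R]_N) :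
  W 0 = 0 ->
  (forall t i j, is_derive t (1 : R) (fun s => W s i j)
     ((A *m W t + W t *m A^T + B *m B^T) i j)) ->
  W t vd vd @[t --> +oo] -->
    b%:R ^+ 2 * gamma ^+ (2 * d) * 'C(2 * d, d)%:R / a ^+ (2 * d).+1.
Proof.
move=> W0 W'.
have -> : b%:R ^+ 2 * gamma ^+ (2 * d) * 'C(2 * d, d)%:R / a ^+ (2 * d).+1 =
    gramian_coef vd vd * (a ^+ (blevel (vd : 'I_N) + blevel (vd : 'I_N)).+1)^-1.
  by rewrite /gramian_coef /npaths /= mul2n -addnn expr2 !mulrA.
under eq_cvg do rewrite (gramian_closed_form W W0 W') gramian_formulaE.
by apply: (cvgMl_tmp (a := gramian_coef vd vd) (erlang_int_cvg _ _ a_gt0)).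
Qed.

End GramianClosedForm.

Lemma central_binomial {F : numFieldType} (d : nat) :
  'C(2 * d, d)%:R = (2 * d)`!%:R / d`!%:R ^+ 2 :> F.
Proof.
rewrite mul2n -addnn -(@bin_fact (d + d) d) ?leq_addr // addnK !natrM.
by field; rewrite natr_fact_neq0.
Qed.

Theorem mainTheorem2 (R : realType) (d b : nat) (gamma nu beta : R)
  (W : R -> 'M[R]_(balloon_n b d)) :
  (2 <= d)%N -> (1 <= b)%N -> 0 < gamma -> 0 < nu ->
  W 0 = 0 ->
  (forall (t : R) (i j : 'I_(balloon_n b d)),
     is_derive t 1 (fun s => W s i j)
       ((balloonA b d gamma nu *m W t + W t *m (balloonA b d gamma nu)^T
         + balloonB R b d *m (balloonB R b d)^T) i j)) ->
  (W t vd vd @[t --> +oo] -->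
     (b%:R ^+ 2 / (2 * nu)) * (gamma / (2 * nu)) ^+ (2 * d)
       * ((2 * d)`!%:R / (d`!%:R ^+ 2)))
  /\
  (beta ^+ 2 / 2 * (W t vd vd)^-1 @[t --> +oo] -->
     beta ^+ 2 / 2 * ((2 * nu) / b%:R ^+ 2) * ((2 * nu) / gamma) ^+ (2 * d)
       * (d`!%:R ^+ 2 / (2 * d)`!%:R)).
Proof.
move=> d2 b1 gamma_gt0 nu_gt0 W0 W'.
have lim_W := gramian_vd_cvg d2 nu_gt0 W W0 W'.
set L := (X in _ --> X) in lim_W.
have [b_neq0 gamma_neq0 nu_neq0 a_neq0] :
    [/\ b%:R != 0 :> R, gamma != 0, nu != 0 & 2 * nu != 0].
  by split; rewrite ?pnatr_eq0 -?lt0n ?mulf_neq0 ?lt0r_neq0.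
have L_eq : L = (b%:R ^+ 2 / (2 * nu)) * (gamma / (2 * nu)) ^+ (2 * d)
    * ((2 * d)`!%:R / (d`!%:R ^+ 2)).
  rewrite /L central_binomial (exprS _ (2 * d)) !expr_div_n.
  by field; rewrite natr_fact_neq0 expf_neq0.
split; first by rewrite -L_eq.
have L_neq0 : L != 0.
  by rewrite L_eq !mulf_neq0 ?invr_eq0 ?expf_neq0 ?natr_fact_neq0 ?mulf_neq0 ?invr_eq0.
have -> : beta ^+ 2 / 2 * ((2 * nu) / b%:R ^+ 2) * ((2 * nu) / gamma) ^+ (2 * d)
    * (d`!%:R ^+ 2 / (2 * d)`!%:R) = beta ^+ 2 / 2 * L^-1.
  rewrite L_eq !expr_div_n.
  by field; rewrite !natr_fact_neq0 !expf_neq0 // nu_neq0 b_neq0.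
by apply: (cvgMl_tmp (a := beta ^+ 2 / 2) (cvgV L_neq0 lim_W)).
Qed.
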